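(* Assume $p_j=1$ for all $j\in[n]$. Let $\mathcal B_{IPR}=\{B_1,\dots,B_m\}$ be the partition of the $n$ jobs returned by IPR with $\rho=2$. Then $b_{\max}\le\frac{W}{\ell}+1$, where, for the final tentative assignment, $b_{\max}=\max_{B\in\mathcal B_{IPR},|B|\ge2}p(B)$, $\mathcal M_{\max}$ is the collection containing a bag of processing time $b_{\max}$, $W=\sum_{B\in\mathcal M_{\max}}p(B)$ and $\ell=|\mathcal M_{\max}|$.
   Context: Jobs $j\in[n]$ have processing times $p_j\ge0$; for a bag $B$, $p(B)=\sum_{j\in B}p_j$. There are $m$ machines with predicted speeds $\hat s_1\ge\dots\ge\hat s_m$; $opt(\mathbf p,\hat{\mathbf s})$ is the minimum makespan $\max_i(\text{load of } i)/\hat s_i$ of assigning jobs to machines with speeds $\hat{\mathbf s}$. Algorithm IPR. Input: $\hat{\mathbf s}$, $\mathbf p$, $\alpha\in(0,1)$, accuracy $\epsilon\in(0,1)$, $\rho\ge1$. (1) Compute a partition $B_1,\dots,B_m$ with $p(B_1)\ge\dots\ge p(B_m)$ such that putting $B_i$ on machine $i$ has makespan at most $(1+\epsilon)opt(\mathbf p,\hat{\mathbf s})$ under speeds $\hat{\mathbf s}$. (2) Set $\overline{OPT}_C=\max_i p(B_i)/\hat s_i$ and tentative assignment $\mathcal M_i=\{B_i\}$. (3) While $\max\{p(B): B\in\cup_i\mathcal M_i, |B|\ge2\}>\rho\min\{p(B):B\in\cup_i\mathcal M_i\}$: compute $\mathcal M'=$ LPT-Rebalance$(\mathcal M)$; if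 $\max_i\sum_{B\in\mathcal M'_i}p(B)/\hat s_i>(1+\alpha)\overline{OPT}_C$ return the current bags $\cup_i\mathcal M_i$; else $\mathcal M\leftarrow\mathcal M'$. (4) Return the bags $\cup_i\mathcal M_i$. LPT-Rebalance: let $B_{\min}$ be a bag of minimum $p(B)$ over all bags, $\mathcal M_{\min}$ its collection, $\mathcal M_{\max}$ a collection containing a bag of maximum $p(B)$ among bags with at least two jobs. Move $B_{\min}$ into $\mathcal M_{\max}$, let $\ell=|\mathcal M_{\max}|$, pool its jobs and redistribute them into $\ell$ new bags by LPT (jobs in non-increasing processing time, each into a currently least-loaded bag); these form the new $\mathcal M_{\max}$. *)

From HB Require Import structures.
From mathcomp Require Import all_boot all_order all_algebra.
Set Implicit Arguments. Unset Strict Implicit. Unset Printing Implicit Defensive.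
Import Order.TTheory GRing.Theory Num.Theory.
Local Open Scope ring_scope.

(* Jobs are 'I_n, machines are 'I_m (machine 0 = fastest).
   A bag is a set of jobs; a tentative assignment (state) maps each machine i
   to its collection M_i, a list of bags (bags are identified by position). *)

Section IPR.
Variables (R : realFieldType) (n m : nat) (p : 'I_n -> R) (s : 'I_m -> R).

Definition pB (B : {set 'I_n}) : R := \sum_(j in B) p j.

Definition maxs (xs : seq R) : R := foldr Num.max 0 xs.

Definition state := 'I_m -> seq {set 'I_n}.

Definition bag_at (M : state) (i : 'I_m) (k : nat) : {set 'I_n} :=
  nth set0 (M i) k.

Definition makespan_asg (g : {ffun 'I_n -> 'I_m}) : R :=
  maxs [seq (\sum_(j | g j == i) p j) / s i | i <- enum 'I_m].

Definition makespan_part (B : 'I_m -> {set 'I_n}) : R :=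
  maxs [seq pB (B i) / s i | i <- enum 'I_m].

Definition makespan_state (M : state) : R :=
  maxs [seq (\sum_(B <- M i) pB B) / s i | i <- enum 'I_m].

Definition is_partition (B : 'I_m -> {set 'I_n}) : Prop :=
  (forall i i' : 'I_m, i != i' -> [disjoint B i & B i']) /\
  (forall j : 'I_n, exists i, j \in B i).

(* Step (1): B_1..B_m partition, p(B_1) >= ... >= p(B_m), and makespan
   <= (1+eps) opt, i.e. <= (1+eps) * makespan of every assignment. *)
Definition step1_ok (eps : R) (B : 'I_m -> {set 'I_n}) : Prop :=
  [/\ is_partition B,
      (forall i i' : 'I_m, (i <= i')%N -> pB (B i') <= pB (B i)) &
      forall g : {ffun 'I_n -> 'I_m}, makespan_part B <= (1 + eps) * makespan_asg g].

(* while-condition: max{p(B) : |B| >= 2} > rho * min{p(B)} *)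
Definition loop_cond (rho : R) (M : state) : Prop :=
  exists i k, [/\ (k < size (M i))%N, (2 <= #|bag_at M i k|)%N &
    exists i' k', (k' < size (M i'))%N /\ rho * pB (bag_at M i' k') < pB (bag_at M i k)].

Inductive lpt_run : seq 'I_n -> seq {set 'I_n} -> seq {set 'I_n} -> Prop :=
| lpt_nil bs : lpt_run [::] bs bs
| lpt_cons j js bs k bs' :
    (k < size bs)%N ->
    (forall k', (k' < size bs)%N -> pB (nth set0 bs k) <= pB (nth set0 bs k')) ->
    lpt_run js (set_nth set0 bs k (j |: nth set0 bs k)) bs' ->
    lpt_run (j :: js) bs bs'.

Definition LPT (l : nat) (J : {set 'I_n}) (bs : seq {set 'I_n}) : Prop :=
  exists js, [/\ perm_eq js (enum J), sorted (fun a b => p b <= p a) js &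
                 lpt_run js (nseq l set0) bs].

Definition rem_at (k : nat) (xs : seq {set 'I_n}) := take k xs ++ drop k.+1 xs.

Definition rebalance (M M' : state) : Prop :=
  exists (imin : 'I_m) kmin (imax : 'I_m) kmax,
   [/\ (kmin < size (M imin))%N,
       (forall i k, (k < size (M i))%N -> pB (bag_at M imin kmin) <= pB (bag_at M i k)),
       (kmax < size (M imax))%N,
       (2 <= #|bag_at M imax kmax|)%N &
       (forall i k, (k < size (M i))%N -> (2 <= #|bag_at M i k|)%N ->
          pB (bag_at M i k) <= pB (bag_at M imax kmax))] /\
   let Bmin := bag_at M imin kmin in
   let Mrem := fun i => if i == imin then rem_at kmin (M i) else M i in
   let coll := Bmin :: Mrem imax in
   exists newbags, LPT (size coll) (\bigcup_(B <- coll) B) newbags /\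
     forall i, M' i = if i == imax then newbags else Mrem i.

(* Step (3): ipr_loop rho alpha OPTC M Mf  means that the while loop started
   in tentative assignment M terminates with final tentative assignment Mf. *)
Inductive ipr_loop (rho alpha OPTC : R) : state -> state -> Prop :=
| loop_stop M : ~ loop_cond rho M -> ipr_loop rho alpha OPTC M M
| loop_reject M M' : loop_cond rho M -> rebalance M M' ->
    (1 + alpha) * OPTC < makespan_state M' -> ipr_loop rho alpha OPTC M M
| loop_accept M M' M'' : loop_cond rho M -> rebalance M M' ->
    makespan_state M' <= (1 + alpha) * OPTC -> ipr_loop rho alpha OPTC M' M'' ->
    ipr_loop rho alpha OPTC M M''.

Definition IPR_final (alpha eps rho : R) (Mf : state) : Prop :=
  exists B : 'I_m -> {set 'I_n}, step1_ok eps B /\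
    ipr_loop rho alpha (makespan_part B) (fun i => [:: B i]) Mf.

End IPR.

From HB Require Import structures.
From mathcomp Require Import all_boot all_order all_algebra.
Set Implicit Arguments. Unset Strict Implicit. Unset Printing Implicit Defensive.
Import Order.TTheory GRing.Theory Num.Theory.
Local Open Scope ring_scope.

(* With unit jobs, the bags of every collection stay balanced: any two of them
   differ in processing time by at most one.  This holds for the initial
   singleton collections, survives removing a bag, and is restored by LPT,
   which always puts the next job (of size at most one) into a least-loaded
   bag.  A largest bag of a balanced collection exceeds the collection's
   average by at most one.  Neither rho nor the acceptance test matters. *)

Lemma mean_ge (R : numFieldType) (T : eqType) (a : R) (F : T -> R) (xs : seq T) :
  xs != [::] -> (forall x, x \in xs -> a <= F x) ->
  a <= (\sum_(x <- xs) F x) / (size xs)%:R.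
Proof.
move=> xs_nz a_le; have size_gt0 : 0 < (size xs)%:R :> R.
  by rewrite ltr0n lt0n size_eq0.
rewrite ler_pdivlMr // mulr_natr -iter_addr_0 -count_predT -big_const_seq.
by rewrite big_seq_cond [X in _ <= X]big_seq_cond; apply: ler_sum => x /andP[/a_le].
Qed.

Section UnitBalance.
Variables (R : realFieldType) (n : nat) (p : 'I_n -> R).
Hypothesis p_ge0 : forall j, 0 <= p j.
Hypothesis p_le1 : forall j, p j <= 1.

Definition balanced (bs : seq {set 'I_n}) : Prop :=
  forall B B', B \in bs -> B' \in bs -> pB p B <= pB p B' + 1.

Lemma pB_setU1 j B : pB p B <= pB p (j |: B) <= pB p B + 1.
Proof.
rewrite /pB; have [jB | jNB] := boolP (j \in B).
  by rewrite (setUidPr _) ?sub1set // lexx lerDl ler01.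
by rewrite big_setU1 //= addrC lerDl p_ge0 lerD2l p_le1.
Qed.

Lemma balanced_sub bs bs' : {subset bs' <= bs} -> balanced bs -> balanced bs'.
Proof. by move=> sub_bs bal B B' /sub_bs + /sub_bs; apply: bal. Qed.

Lemma balanced_seq1 B : balanced [:: B].
Proof. by move=> B1 B2; rewrite !inE => /eqP-> /eqP->; rewrite lerDl ler01. Qed.

Lemma balanced_nseq0 l : balanced (nseq l set0).
Proof. by move=> B B' /nseqP[-> _] /nseqP[-> _]; rewrite lerDl ler01. Qed.

Lemma balanced_rem_at k bs : balanced bs -> balanced (rem_at k bs).
Proof. by apply: balanced_sub => B; rewrite mem_cat => /orP[/mem_take | /mem_drop]. Qed.

Lemma balanced_add_to_min j bs k :
  (k < size bs)%N ->
  (forall k', (k' < size bs)%N -> pB p (nth set0 bs k) <= pB p (nth set0 bs k')) ->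
  balanced bs -> balanced (set_nth set0 bs k (j |: nth set0 bs k)).
Proof.
move=> k_lt k_min bal; set Bk := nth set0 bs k; set B1 := j |: Bk.
have Bk_in : Bk \in bs by apply: mem_nth.
have Bk_le B : B \in bs -> pB p Bk <= pB p B.
  by move=> /(nthP set0)[k' k'_lt <-]; apply: k_min.
have /andP[Bk_B1 B1_Bk] := pB_setU1 j Bk.
have in_new B : B \in set_nth set0 bs k B1 -> B = B1 \/ B \in bs.
  rewrite set_nthE k_lt mem_cat inE => /or3P[/mem_take | /eqP-> | /mem_drop];
  by [right | left].
move=> B B' /in_new[-> | B_in] /in_new[-> | B'_in].
- by rewrite lerDl ler01.
- by rewrite (le_trans B1_Bk) // lerD2r Bk_le.
- by rewrite (le_trans (bal _ _ B_in Bk_in)) // lerD2r.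
- exact: bal.
Qed.

Lemma balanced_lpt_run js bs bs' :
  lpt_run p js bs bs' -> balanced bs -> balanced bs'.
Proof.
elim=> {js bs bs'} // j js bs k bs' k_lt k_min _ IH bal.
exact/IH/balanced_add_to_min.
Qed.

Lemma balanced_ipr_loop m (s : 'I_m -> R) rho alpha OPTC (M Mf : state n m) :
  ipr_loop p s rho alpha OPTC M Mf ->
  (forall i, balanced (M i)) -> forall i, balanced (Mf i).
Proof.
elim=> {M Mf} // M M' M'' _ [imin [kmin [imax [kmax [_ [newbags [[js [_ _ lpt]] M'E]]]]]]].
move=> _ _ IH bal.
apply: IH => i; rewrite M'E; case: ifP => _.
  by apply: (balanced_lpt_run lpt); apply: balanced_nseq0.
by case: ifP => _; [apply: balanced_rem_at |]; apply: bal.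
Qed.

End UnitBalance.

Theorem lemma11 (R : realFieldType) (n m : nat) (p : 'I_n -> R) (s : 'I_m -> R)
  (alpha eps : R) (Mf : state n m) :
  (forall i, 0 < s i) ->
  (forall i i' : 'I_m, (i <= i')%N -> s i' <= s i) ->
  0 < alpha < 1 -> 0 < eps < 1 ->
  (forall j, p j = 1) ->
  IPR_final p s alpha eps 2 Mf ->
  forall (i : 'I_m) (k : nat),
    (k < size (Mf i))%N ->
    (2 <= #|bag_at Mf i k|)%N ->
    (forall (i' : 'I_m) (k' : nat), (k' < size (Mf i'))%N ->
        (2 <= #|bag_at Mf i' k'|)%N -> pB p (bag_at Mf i' k') <= pB p (bag_at Mf i k)) ->
    pB p (bag_at Mf i k) <= (\sum_(B <- Mf i) pB p B) / (size (Mf i))%:R + 1.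
Proof.
move=> _ _ _ _ p1 [B [_ loop]] i k k_lt _ _.
have p_ge0 j : 0 <= p j by rewrite p1.
have p_le1 j : p j <= 1 by rewrite p1.
have bal : balanced p (Mf i).
  by apply: (balanced_ipr_loop p_ge0 p_le1 loop) => i'; apply: balanced_seq1.
rewrite -lerBlDr; apply: mean_ge; first by case: (Mf i) k_lt.
by move=> B' B'_in; rewrite lerBlDr bal ?mem_nth.
Qed.
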